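(* Let $SO$ be an inflationary semi-overlap function and define $I_{SO}:[0,1]^2\to[0,1]$ by $I_{SO}(u,v)=\sup\{w\in[0,1]\mid SO(u,w)\le v\}$. Then $I_{SO}$ is a fuzzy implication, and $SO$ and $I_{SO}$ satisfy the residuation property: for all $u,v,w\in[0,1]$, $SO(u,w)\le v \iff I_{SO}(u,v)\ge w$.
   Context: A semi-overlap function is a function $SO:[0,1]^2\to[0,1]$ such that for all $u,v\in[0,1]$: (S1) $SO(u,v)=SO(v,u)$; (S2) if $uv=0$ then $SO(u,v)=0$; (S3) if $uv=1$ then $SO(u,v)=1$; (S4) $SO$ is increasing in each variable; (S5) $SO$ is left-continuous, meaning that for every $u\in[0,1]$ and every nonempty family $\{v_i\mid i\in I\}\subseteq[0,1]$, $SO(u,\sup_{i\in I}v_i)=\sup_{i\in I}SO(u,v_i)$. It is inflationary if $SO(u,1)\ge u$ for all $u$. A fuzzy implication is a function $I:[0,1]^2\to[0,1]$ such that: $u\le v$ implies $I(v,w)\le I(u,w)$; $v\le w$ implies $I(u,v)\le I(u,w)$; $I(0,0)=1$; $I(1,1)=1$; $I(1,0)=0$. *)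

From Stdlib Require Import Reals.
From Coquelicot Require Import Coquelicot.
Open Scope R_scope.

Definition in01 (x : R) : Prop := 0 <= x <= 1.

(* Semi-overlap function on [0,1]^2 (values outside [0,1]^2 are irrelevant). *)
Definition semi_overlap (SO : R -> R -> R) : Prop :=
  (forall u v, in01 u -> in01 v -> in01 (SO u v)) /\
  (forall u v, in01 u -> in01 v -> SO u v = SO v u) /\
  (forall u v, in01 u -> in01 v -> u * v = 0 -> SO u v = 0) /\
  (forall u v, in01 u -> in01 v -> u * v = 1 -> SO u v = 1) /\
  (forall u v w, in01 u -> in01 v -> in01 w -> v <= w ->
              SO u v <= SO u w) /\
  (* S5: left continuity: for every nonempty family {v_i | i in I} in [0,1],
     SO(u, sup_i v_i) = sup_i SO(u, v_i) *)
  (forall (u : R) (I : Type) (vf : I -> R) (s : R), in01 u ->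
     inhabited I -> (forall i, in01 (vf i)) ->
     is_lub (fun x => exists i, x = vf i) s ->
     is_lub (fun y => exists i, y = SO u (vf i)) (SO u s)).

Definition inflationary (SO : R -> R -> R) : Prop :=
  forall u, in01 u -> SO u 1 >= u.

Definition fuzzy_implication (I : R -> R -> R) : Prop :=
  (forall u v, in01 u -> in01 v -> in01 (I u v)) /\
  (forall u v w, in01 u -> in01 v -> in01 w -> u <= v -> I v w <= I u w) /\
  (forall u v w, in01 u -> in01 v -> in01 w -> v <= w -> I u v <= I u w) /\
  I 0 0 = 1 /\ I 1 1 = 1 /\ I 1 0 = 0.

Definition I_SO (SO : R -> R -> R) (u v : R) : R :=
  real (Lub_Rbar (fun w => in01 w /\ SO u w <= v)).

(* Left
   continuity of SO puts this supremum in the set itself, i.e.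
   SO(u, I_SO(u,v)) <= v, and together with monotonicity of SO this is exactly
   the residuation property.  Residuation then transfers the monotonicity of SO
   to I_SO, the boundary conditions (S2), (S3) give I_SO(0,0) = I_SO(1,1) = 1,
   and inflationarity forces I_SO(1,0) <= SO(1, I_SO(1,0)) <= 0. *)

From Stdlib Require Import Reals Lra.
From Coquelicot Require Import Coquelicot.
Open Scope R_scope.

Lemma real_Lub_Rbar_is_lub (E : R -> Prop) :
  bound E -> (exists x, E x) -> is_lub E (real (Lub_Rbar E)).
Proof.
  intros Hbound Hne.
  destruct (completeness E Hbound Hne) as [m [Hub Hleast]].
  rewrite (is_lub_Rbar_unique E m); [split; assumption |].
  split.
  - exact Hub.
  - destruct Hne as [x Ex].
    intros [b | |] Hb; simpl.
    + apply Hleast; intros y Ey; exact (Hb y Ey).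
    + exact I.
    + exact (Hb x Ex).
Qed.

Section ResidualImplication.

Variable SO : R -> R -> R.
Hypothesis SO_semi : semi_overlap SO.

Lemma SO_x0 (u : R) : in01 u -> SO u 0 = 0.
Proof.
  destruct SO_semi as (_ & _ & S2 & _).
  intros Hu; apply S2; [exact Hu | unfold in01; lra | ring].
Qed.

Lemma SO_le_l (u u' w : R) :
  in01 u -> in01 u' -> in01 w -> u <= u' -> SO u w <= SO u' w.
Proof.
  destruct SO_semi as (_ & S1 & _ & _ & S4 & _).
  intros Hu Hu' Hw Huu'.
  rewrite (S1 u w), (S1 u' w) by assumption.
  exact (S4 w u u' Hw Hu Hu' Huu').
Qed.

(* Left continuity (S5) is stated for indexed families; index a set by its own
   elements to apply it. *)
Lemma SO_is_lub_le (u v s : R) (E : R -> Prop) :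
  in01 u -> (exists w, E w) -> (forall w, E w -> in01 w) -> is_lub E s ->
  (forall w, E w -> SO u w <= v) -> SO u s <= v.
Proof.
  destruct SO_semi as (_ & _ & _ & _ & _ & S5).
  intros Hu [w0 Ew0] HE [Hub Hleast] HSO.
  set (vf := @proj1_sig R E).
  assert (Hlub : is_lub (fun x => exists i, x = vf i) s).
  { split.
    - intros x [[y Ey] ->]; exact (Hub y Ey).
    - intros b Hb; apply Hleast; intros y Ey.
      apply Hb; exists (exist _ y Ey); reflexivity. }
  apply (S5 u {w | E w} vf s Hu (inhabits (exist _ w0 Ew0))
            (fun i => HE _ (proj2_sig i)) Hlub).
  intros y [[x Ex] ->]; exact (HSO x Ex).
Qed.

Lemma I_SO_is_lub (u v : R) :
  in01 u -> in01 v -> is_lub (fun w => in01 w /\ SO u w <= v) (I_SO SO u v).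
Proof.
  intros Hu Hv; apply real_Lub_Rbar_is_lub.
  - exists 1; intros w [Hw _]; apply Hw.
  - exists 0; rewrite SO_x0 by exact Hu; unfold in01 in *; lra.
Qed.

Lemma I_SO_in01 (u v : R) : in01 u -> in01 v -> in01 (I_SO SO u v).
Proof.
  intros Hu Hv; destruct (I_SO_is_lub u v Hu Hv) as [Hub Hleast]; split.
  - apply Hub; rewrite SO_x0 by exact Hu; unfold in01 in *; lra.
  - apply Hleast; intros w [Hw _]; apply Hw.
Qed.

Lemma SO_I_SO_le (u v : R) : in01 u -> in01 v -> SO u (I_SO SO u v) <= v.
Proof.
  intros Hu Hv.
  apply (SO_is_lub_le u v _ (fun w => in01 w /\ SO u w <= v) Hu).
  - exists 0; rewrite SO_x0 by exact Hu; unfold in01 in *; lra.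
  - intros w [Hw _]; exact Hw.
  - exact (I_SO_is_lub u v Hu Hv).
  - intros w [_ Hw]; exact Hw.
Qed.

Lemma le_I_SO_iff (u v w : R) :
  in01 u -> in01 v -> in01 w -> w <= I_SO SO u v <-> SO u w <= v.
Proof.
  destruct SO_semi as (_ & _ & _ & _ & S4 & _).
  intros Hu Hv Hw; split.
  - intros Hle; eapply Rle_trans; [| exact (SO_I_SO_le u v Hu Hv)].
    exact (S4 u w _ Hu Hw (I_SO_in01 u v Hu Hv) Hle).
  - intros HSO; apply (I_SO_is_lub u v Hu Hv); split; assumption.
Qed.

Lemma I_SO_le_l (u u' v : R) :
  in01 u -> in01 u' -> in01 v -> u <= u' -> I_SO SO u' v <= I_SO SO u v.
Proof.
  intros Hu Hu' Hv Huu'.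
  pose proof (I_SO_in01 u' v Hu' Hv) as Hi.
  apply le_I_SO_iff; try assumption.
  eapply Rle_trans; [exact (SO_le_l u u' _ Hu Hu' Hi Huu') |].
  exact (SO_I_SO_le u' v Hu' Hv).
Qed.

Lemma I_SO_le_r (u v v' : R) :
  in01 u -> in01 v -> in01 v' -> v <= v' -> I_SO SO u v <= I_SO SO u v'.
Proof.
  intros Hu Hv Hv' Hvv'.
  apply le_I_SO_iff; try exact (I_SO_in01 u v Hu Hv); try assumption.
  pose proof (SO_I_SO_le u v Hu Hv); lra.
Qed.

Lemma I_SO_eq1 (u v : R) : in01 u -> in01 v -> SO u 1 <= v -> I_SO SO u v = 1.
Proof.
  intros Hu Hv HSO.
  assert (H1 : 1 <= I_SO SO u v)
    by (apply le_I_SO_iff; try assumption; unfold in01; lra).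
  pose proof (I_SO_in01 u v Hu Hv) as Hi; unfold in01 in Hi; lra.
Qed.

Lemma I_SO_10 : inflationary SO -> I_SO SO 1 0 = 0.
Proof.
  destruct SO_semi as (_ & S1 & _).
  intros Hinfl.
  assert (H0 : in01 0) by (unfold in01; lra).
  assert (H1 : in01 1) by (unfold in01; lra).
  pose proof (I_SO_in01 1 0 H1 H0) as Hi.
  pose proof (SO_I_SO_le 1 0 H1 H0) as Hle.
  rewrite S1 in Hle by assumption.
  pose proof (Hinfl _ Hi); unfold in01 in Hi; lra.
Qed.

End ResidualImplication.

Theorem proposition3p9 (SO : R -> R -> R) :
  semi_overlap SO -> inflationary SO ->
  fuzzy_implication (I_SO SO) /\
  (forall u v w, in01 u -> in01 v -> in01 w ->
     (SO u w <= v <-> I_SO SO u v >= w)).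
Proof.
  intros HSO Hinfl.
  pose proof HSO as (_ & _ & S2 & S3 & _).
  assert (H0 : in01 0) by (unfold in01; lra).
  assert (H1 : in01 1) by (unfold in01; lra).
  split; [split; [| split; [| split; [| split; [| split]]]] |].
  - exact (I_SO_in01 SO HSO).
  - exact (I_SO_le_l SO HSO).
  - exact (I_SO_le_r SO HSO).
  - apply I_SO_eq1; auto; rewrite S2 by (auto; ring); lra.
  - apply I_SO_eq1; auto; rewrite S3 by (auto; ring); lra.
  - exact (I_SO_10 SO HSO Hinfl).
  - intros u v w Hu Hv Hw.
    rewrite <- (le_I_SO_iff SO HSO u v w Hu Hv Hw); split; intros; lra.
Qed.
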